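(* Let $q\ge2$ and let $f$ be a $q$-regular sequence with a zero-insensitive minimal linear representation $(\mathbf{u},(M_i)_{0\le i<q},\mathbf{v})$, so that $f(n)=\mathbf{u}^t M_{n_0}M_{n_1}\cdots M_{n_L}\mathbf{v}$ where $n_L\cdots n_0$ is the $q$-ary expansion of $n$. Let $r$ be a nonnegative integer. Then the following are equivalent: (i) $f$ is $q$-quasimultiplicative with parameter $r$, i.e. $f(q^{k+r}a+b)=f(a)f(b)$ for all nonnegative integers $a,b,k$ with $0\le b<q^k$; (ii) $M_0^r=\mathbf{v}\mathbf{u}^t$.
   Context: A function $f$ on the nonnegative integers is $q$-regular if $f(n)=\mathbf{u}^t\mathbf{f}(n)$ for a vector $\mathbf{u}$ and a vector-valued function $\mathbf{f}$ for which there are square matrices $M_0,\dots,M_{q-1}$ with $\mathbf{f}(qn+i)=M_i\mathbf{f}(n)$ for all $0\le i<q$ and $qn+i>0$; set $\mathbf{v}=\mathbf{f}(0)$. Equivalently $f(n)=\mathbf{u}^t M_{n_0}M_{n_1}\cdots M_{n_L}\mathbf{v}$ for the $q$-ary expansion $n_L\cdots n_0$ of $n$. The triple $(\mathbf{u},(M_i)_{0\le i<q},\mathbf{v})$ is a linear representation of $f$; it is zero-insensitive if $M_0\mathbf{v}=\mathbf{v}$, and minimal if the dimension of the matrices is minimal among all linear representations of $f$. *)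

From HB Require Import structures.
From mathcomp Require Import all_boot all_order all_algebra.
Set Implicit Arguments. Unset Strict Implicit. Unset Printing Implicit Defensive.
Import GRing.Theory.
Local Open Scope ring_scope.

(* Little-endian q-ary digits n_0, n_1, ..., n_L of n (empty list for n = 0).
   The fuel n suffices whenever q >= 2. *)
Fixpoint digits_aux (q fuel n : nat) : seq nat :=
  match fuel with
  | 0 => [::]
  | f.+1 => if n == 0%N then [::] else (n %% q)%N :: digits_aux q f (n %/ q)%N
  end.
Definition digits (q n : nat) : seq nat := digits_aux q n n.

Section LinRep.
Variables (K : fieldType) (q d : nat).

Definition digmx (M : 'I_q -> 'M[K]_d) (i : nat) : 'M[K]_d :=
  if insub i is Some j then M j else 0.

Definition digprod (M : 'I_q -> 'M[K]_d) (s : seq nat) : 'M[K]_d :=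
  foldr (fun i A => digmx M i *m A) 1%:M s.

Definition is_linrep (f : nat -> K) (u : 'cV[K]_d) (M : 'I_q -> 'M[K]_d)
    (v : 'cV[K]_d) : Prop :=
  forall n : nat, f n = (u^T *m digprod M (digits q n) *m v) 0 0.

Definition zero_insensitive (M : 'I_q -> 'M[K]_d) (v : 'cV[K]_d) : Prop :=
  digmx M 0 *m v = v.
End LinRep.

Definition minimal_linrep (K : fieldType) (q d : nat) (f : nat -> K)
    (u : 'cV[K]_d) (M : 'I_q -> 'M[K]_d) (v : 'cV[K]_d) : Prop :=
  is_linrep f u M v /\
  forall (d' : nat) (u' : 'cV[K]_d') (M' : 'I_q -> 'M[K]_d') (v' : 'cV[K]_d'),
    is_linrep f u' M' v' -> (d <= d')%N.

Definition quasimult (K : fieldType) (q r : nat) (f : nat -> K) : Prop :=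
  forall a b k : nat, (b < q ^ k)%N -> f (q ^ (k + r) * a + b)%N = f a * f b.

(* Read from the least significant digit, q^(k+r) a + b is written with the k
   digits of b (padded with zeros), then r zeros, then the digits of a, and
   zero-insensitivity makes the padding invisible to the representation.  Hence
   quasimultiplicativity says exactly that u^T P(x) (M_0^r - v u^T) P(y) v = 0
   for all digit words x, y, where P(w) is the product of the digit matrices.
   A minimal representation is reachable and observable: otherwise restricting
   to the span of the row vectors u^T P(x) (or of the columns P(y) v) gives a
   smaller one.  So these values determine the middle matrix, which is 0. *)

From mathcomp Require Import all_boot all_order all_algebra.
From mathcomp Require Import zify.
From Stdlib Require Import Classical.
Set Implicit Arguments. Unset Strict Implicit. Unset Printing Implicit Defensive.
Import GRing.Theory.
Local Open Scope ring_scope.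

Section Series.
Variables (K : fieldType) (q : nat).

Definition series d (u : 'cV[K]_d) (M : 'I_q -> 'M[K]_d) (v : 'cV[K]_d)
    (w : seq nat) : K :=
  (u^T *m digprod M w *m v) 0 0.

Definition minimal_series d (u : 'cV[K]_d) (M : 'I_q -> 'M[K]_d) (v : 'cV[K]_d) :=
  forall d' (u' : 'cV[K]_d') (M' : 'I_q -> 'M[K]_d') (v' : 'cV[K]_d'),
    (forall w, series u' M' v' w = series u M v w) -> (d <= d')%N.

Lemma digmx_ord d (M : 'I_q -> 'M[K]_d) (j : 'I_q) : digmx M j = M j.
Proof. by rewrite /digmx valK. Qed.

Lemma digprod_cons d (M : 'I_q -> 'M[K]_d) i s :
  digprod M (i :: s) = digmx M i *m digprod M s.
Proof. by []. Qed.

Lemma digprod_cat d (M : 'I_q -> 'M[K]_d) s t :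
  digprod M (s ++ t) = digprod M s *m digprod M t.
Proof. by elim: s => [|i s IH]; rewrite ?mul1mx //= IH mulmxA. Qed.

Lemma digprod_rcons d (M : 'I_q -> 'M[K]_d) s i :
  digprod M (rcons s i) = digprod M s *m digmx M i.
Proof. by rewrite -cats1 digprod_cat /= mulmx1. Qed.

Lemma digprod_nseq0 d (M : 'I_q -> 'M[K]_d) r :
  digprod M (nseq r 0%N) = digmx M 0 ^+ r.
Proof. by elim: r => [|r IH]; rewrite ?expr0 //= IH exprS. Qed.

Lemma digprod_nondigit d (M : 'I_q -> 'M[K]_d) w :
  ~~ all (gtn q) w -> digprod M w = 0.
Proof.
elim: w => //= i w IH; rewrite negb_and => /orP[hi | hw].
  by rewrite /digmx insubF ?mul0mx //; apply: negbTE.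
by rewrite IH ?mulmx0.
Qed.

Lemma digprod_tr d (M : 'I_q -> 'M[K]_d) w :
  digprod (fun i => (M i)^T) w = (digprod M (rev w))^T.
Proof.
elim: w => [|i w IH] /=; first by rewrite trmx1.
rewrite IH rev_cons digprod_rcons trmx_mul; congr (_ *m _).
by rewrite /digmx; case: insub => //; rewrite trmx0.
Qed.

Lemma series_tr d (u : 'cV[K]_d) M v w :
  series v (fun i => (M i)^T) u w = series u M v (rev w).
Proof. by rewrite /series digprod_tr -[u]trmxK -!trmx_mul mxE trmxK mulmxA. Qed.

Lemma minimal_series_tr d (u : 'cV[K]_d) M v :
  minimal_series u M v -> minimal_series v (fun i => (M i)^T) u.
Proof.
move=> min d' u' M' v' eq_series; apply: (min d' v' (fun i => (M' i)^T) u') => w.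
by rewrite series_tr eq_series series_tr revK.
Qed.

(* Restricting to an invariant subspace containing u^T, written in a basis B of
   it, gives a representation of dimension \rank W with the same series. *)
Lemma minimal_series_invariant_full d (u : 'cV[K]_d) M v m (W : 'M[K]_(m, d)) :
  minimal_series u M v -> (u^T <= W)%MS -> (forall j, W *m M j <= W)%MS ->
  row_full W.
Proof.
move=> min uW WM; have := eq_row_base W; move: (row_base W) => B eqBW.
have MB j : (B *m M j <= B)%MS.
  by rewrite eqBW; apply: submx_trans (WM j); apply: submxMr; rewrite eqBW.
pose N j := B *m M j *m pinvmx B.
have NB w : digprod N w *m B = B *m digprod M w.
  elim: w => [|i w IH]; first by rewrite mul1mx mulmx1.
  rewrite !digprod_cons -mulmxA IH !mulmxA; congr (_ *m _).
  by rewrite /digmx; case: insub => [j|]; rewrite ?mul0mx ?mulmx0 // mulmxKpV.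
have uB : u^T *m pinvmx B *m B = u^T by rewrite mulmxKpV ?eqBW.
have eq_series w : series (u^T *m pinvmx B)^T N (B *m v) w = series u M v w.
  by rewrite /series trmxK mulmxA -[_ *m _ *m B]mulmxA NB mulmxA uB.
by rewrite /row_full eqn_leq rank_leq_col (min _ _ _ _ eq_series).
Qed.

Lemma span_exists (T : Type) d (g : T -> 'rV[K]_d) :
  exists W : 'M[K]_d, (forall x, g x <= W)%MS /\
    forall m (B : 'M[K]_(m, d)) C, (forall x, g x *m C <= B)%MS -> (W *m C <= B)%MS.
Proof.
pose span L := foldr (fun x W => (g x + W)%MS) (0 : 'M[K]_d) L.
have span_mul L m (B : 'M[K]_(m, d)) C :
    (forall x, g x *m C <= B)%MS -> (span L *m C <= B)%MS.
  move=> gB; elim: L => [|x L IH] /=; first by rewrite mul0mx sub0mx.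
  by rewrite (eqmxMr _ (addsmxE _ _)) mul_col_mx col_mx_sub gB.
suff [L spanL] : exists L, forall x, (g x <= span L)%MS.
  by exists (span L); split=> // m B C; apply: span_mul.
suff rank_ind k L0 :
    (d - \rank (span L0) <= k)%N -> exists L, forall x, (g x <= span L)%MS.
  exact: rank_ind d [::] (leq_subr _ _).
elim: k L0 => [|k IH] L rkL.
  exists L => x; apply: submx_full.
  by rewrite /row_full eqn_leq rank_leq_col -subn_eq0 -leqn0.
have [spanL | /not_all_ex_not [x gx]] := classic (forall x, (g x <= span L)%MS).
  by exists L.
apply: (IH (x :: L)).
have : (\rank (span L) < \rank (span (x :: L)))%N.
  apply: rank_ltmx; rewrite ltmxE /= addsmxSr; apply/negP => sub.
  by apply: gx; apply: submx_trans (addsmxSl _ _) sub.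
by have := rank_leq_col (span (x :: L)); lia.
Qed.

Lemma minimal_series_observable d (u : 'cV[K]_d) M v p (w : 'M[K]_(d, p)) :
  minimal_series u M v -> (forall x, u^T *m digprod M x *m w = 0) -> w = 0.
Proof.
move=> min uw.
have [W [gW W_min]] := span_exists (fun x => u^T *m digprod M x).
have W_full : row_full W.
  apply: (minimal_series_invariant_full min); first by have := gW [::]; rewrite mulmx1.
  by move=> j; apply: W_min => x; rewrite -digmx_ord -mulmxA -digprod_rcons.
have : (1%:M <= kermx w)%MS.
  apply: submx_trans (submx_full _ W_full) _; rewrite -[W]mulmx1.
  by apply: W_min => x; rewrite mulmx1 sub_kermx uw.
by rewrite sub_kermx mul1mx => /eqP.
Qed.

Lemma minimal_series_eq0 d (u : 'cV[K]_d) M v (D : 'M[K]_d) :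
  minimal_series u M v ->
  (forall x y, all (gtn q) x -> all (gtn q) y ->
     (u^T *m digprod M x *m D *m digprod M y *m v) 0 0 = 0) ->
  D = 0.
Proof.
move=> min uDv.
have {}uDv x y : u^T *m digprod M x *m D *m digprod M y *m v = 0.
  have [hx | /digprod_nondigit ->] := boolP (all (gtn q) x); last first.
    by rewrite mulmx0 !mul0mx.
  have [hy | /digprod_nondigit ->] := boolP (all (gtn q) y); last first.
    by rewrite mulmx0 mul0mx.
  by apply/matrixP => i j; rewrite !ord1 uDv ?mxE.
have Dv y : D *m digprod M y *m v = 0.
  by apply: (minimal_series_observable min) => x; rewrite !mulmxA uDv.
apply: trmx_inj; rewrite trmx0.
apply: (minimal_series_observable (minimal_series_tr min)) => x.
by rewrite digprod_tr -!trmx_mul mulmxA Dv trmx0.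
Qed.

Lemma minimal_linrep_series (f : nat -> K) d (u : 'cV[K]_d) M v :
  minimal_linrep f u M v -> minimal_series u M v.
Proof.
case=> lin min d' u' M' v' eq_series; apply: (min _ u' M' v') => n.
by move: (eq_series (digits q n)); rewrite /series lin => ->.
Qed.

End Series.

Section Digits.
Variable q : nat.

Definition digval (w : seq nat) : nat := foldr (fun i n => i + q * n)%N 0%N w.

Fixpoint digits_pad (k b : nat) : seq nat :=
  if k is k'.+1 then (b %% q)%N :: digits_pad k' (b %/ q) else [::].

Lemma digval_cat s t : digval (s ++ t) = (digval s + q ^ size s * digval t)%N.
Proof. by elim: s => [|i s IH] /=; rewrite ?mul1n // IH expnS; lia. Qed.

Lemma digval_nseq0 r : digval (nseq r 0%N) = 0%N.
Proof. by elim: r => //= r ->; rewrite muln0. Qed.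

Lemma digval_lt w : all (gtn q) w -> (digval w < q ^ size w)%N.
Proof. by elim: w => //= i w IH /andP[hi /IH]; rewrite expnS; nia. Qed.

Lemma size_digits_pad k b : size (digits_pad k b) = k.
Proof. by elim: k b => //= k IH b; rewrite IH. Qed.

Hypothesis hq : (2 <= q)%N.

Lemma digits_aux_fuel f1 f2 n :
  (n <= f1)%N -> (n <= f2)%N -> digits_aux q f1 n = digits_aux q f2 n.
Proof.
elim: f1 f2 n => [|f1 IH] [|f2] [|n] //= le1 le2; congr (_ :: _); apply: IH.
  by rewrite -ltnS (leq_trans (ltn_Pdiv hq _)).
by rewrite -ltnS (leq_trans (ltn_Pdiv hq _)).
Qed.

Lemma digits_cons n : (0 < n)%N -> digits q n = (n %% q)%N :: digits q (n %/ q).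
Proof.
case: n => // n _; rewrite /digits /=; congr (_ :: _); apply: digits_aux_fuel => //.
by rewrite -ltnS ltn_Pdiv.
Qed.

Lemma digits_pad_digit k b : all (gtn q) (digits_pad k b).
Proof. by elim: k b => //= k IH b; rewrite IH ltn_pmod // ltnW. Qed.

Lemma digval_digits_pad k b : (b < q ^ k)%N -> digval (digits_pad k b) = b.
Proof.
elim: k b => [|k IH] b /=; first by rewrite expn0 ltnS leqn0 => /eqP.
move=> hb; rewrite IH; last by rewrite ltn_divLR ?(ltnW hq) // -expnSr.
by rewrite [RHS](divn_eq b q); lia.
Qed.

(* Zero-insensitivity is what allows the trailing zero digits of w, invisible in
   digval w, to be dropped. *)
Lemma digprod_digits_digval (K : fieldType) d (M : 'I_q -> 'M[K]_d) v w :
  zero_insensitive M v -> all (gtn q) w ->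
  digprod M (digits q (digval w)) *m v = digprod M w *m v.
Proof.
move=> hzi; elim: w => [|i w IH] /= => [_|/andP[hi hw]]; first by rewrite /digits.
rewrite -mulmxA -IH //; have [val0 | val_gt0] := posnP (i + q * digval w)%N.
  have [-> ->] : i = 0%N /\ digval w = 0%N by nia.
  by rewrite muln0 /digits /= !mul1mx hzi.
have q_gt0 : (0 < q)%N by apply: ltnW.
rewrite digits_cons // addnC mulnC modnMDl modn_small // divnMDl // divn_small //.
by rewrite addn0 /= mulmxA.
Qed.

End Digits.

Section QuasiMultiplicative.
Variables (K : fieldType) (q : nat) (f : nat -> K) (d : nat).
Variables (u : 'cV[K]_d) (M : 'I_q -> 'M[K]_d) (v : 'cV[K]_d).
Hypotheses (hq : (2 <= q)%N) (hlin : is_linrep f u M v) (hzi : zero_insensitive M v).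

Lemma linrep_digval w : all (gtn q) w -> f (digval q w) = series u M v w.
Proof. by move=> hw; rewrite hlin /series -!mulmxA digprod_digits_digval. Qed.

Lemma linrep_shift r x y : all (gtn q) x -> all (gtn q) y ->
  f (q ^ (size x + r) * digval q y + digval q x) =
  (u^T *m digprod M x *m digmx M 0 ^+ r *m digprod M y *m v) 0 0.
Proof.
move=> hx hy; have xry_digit : all (gtn q) (x ++ nseq r 0%N ++ y).
  by rewrite !all_cat all_nseq hx hy /= (ltnW hq) orbT.
have -> : (q ^ (size x + r) * digval q y + digval q x)%N =
    digval q (x ++ nseq r 0%N ++ y).
  by rewrite !digval_cat digval_nseq0 size_nseq expnD mulnA; lia.
by rewrite linrep_digval // /series !digprod_cat digprod_nseq0 !mulmxA.
Qed.

Lemma quasimult_iff_words r :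
  quasimult q r f <-> forall x y, all (gtn q) x -> all (gtn q) y ->
    (u^T *m digprod M x *m (digmx M 0 ^+ r - v *m u^T) *m digprod M y *m v) 0 0 = 0.
Proof.
have split_form x y : (u^T *m digprod M x *m (v *m u^T) *m digprod M y *m v) 0 0 =
    series u M v x * series u M v y.
  have -> : u^T *m digprod M x *m (v *m u^T) *m digprod M y *m v =
      (u^T *m digprod M x *m v) *m (u^T *m digprod M y *m v) by rewrite !mulmxA.
  by rewrite [LHS]mxE big_ord1.
have words_eq x y : all (gtn q) x -> all (gtn q) y ->
    (u^T *m digprod M x *m (digmx M 0 ^+ r - v *m u^T) *m digprod M y *m v) 0 0 =
    f (q ^ (size x + r) * digval q y + digval q x) - f (digval q y) * f (digval q x).
  move=> hx hy; rewrite linrep_shift // !linrep_digval // mulrC -split_form.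
  by rewrite mulmxBr !mulmxBl mxE [(- _ : 'M_1) _ _]mxE.
split=> [qm x y hx hy | hw a b k hb].
  by rewrite words_eq // qm ?digval_lt // subrr.
have [x_digit y_digit] := (digits_pad_digit hq k b, digits_pad_digit hq a a).
move: (hw _ _ x_digit y_digit); rewrite words_eq // size_digits_pad.
rewrite (digval_digits_pad hq hb) (digval_digits_pad hq (ltn_expl a hq)).
by move=> /eqP; rewrite subr_eq0 mulrC => /eqP.
Qed.

End QuasiMultiplicative.

Theorem theorem8 (K : fieldType) (q : nat) (hq : (2 <= q)%N) (f : nat -> K)
    (d : nat) (u : 'cV[K]_d) (M : 'I_q -> 'M[K]_d) (v : 'cV[K]_d)
    (hmin : minimal_linrep f u M v) (hzi : zero_insensitive M v) (r : nat) :
  quasimult q r f <-> digmx M 0 ^+ r = v *m u^T.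
Proof.
rewrite (quasimult_iff_words hq hmin.1 hzi); split=> [words_zero | ->].
  apply/eqP; rewrite -subr_eq0; apply/eqP.
  exact: minimal_series_eq0 (minimal_linrep_series hmin) words_zero.
by move=> x y _ _; rewrite subrr mulmx0 !mul0mx mxE.
Qed.
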